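(* A sequence $X\in2^\omega$ is computable if and only if there exists a left-c.e. semi-measure $\rho$ such that $X$ is an atom of $\overline\rho$, i.e., $\lim_n\overline\rho(X{\upharpoonright}n)>0$.
   Context: $2^{<\omega}$ is the set of finite binary strings, $\varepsilon$ the empty string, $X{\upharpoonright}n$ the first $n$ bits of $X$. A semi-measure is $\rho:2^{<\omega}\to[0,1]$ with $\rho(\varepsilon)=1$ and $\rho(\sigma)\ge\rho(\sigma0)+\rho(\sigma1)$; left-c.e. means its values are uniformly approximable from below by computable non-decreasing rational sequences. $\overline\rho(\sigma)=\inf_{n\ge|\sigma|}\sum_{\tau\succeq\sigma,\,|\tau|=n}\rho(\tau)$, which defines a measure on $2^\omega$; $X$ is an atom of $\overline\rho$ if $\overline\rho(\{X\})>0$. *)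

From Stdlib Require Import Reals List Arith.
From Coquelicot Require Import Coquelicot.
Import ListNotations.
Open Scope R_scope.

Inductive rec : Type :=
  | RZero : rec
  | RSucc : rec
  | RProj : nat -> rec
  | RComp : rec -> list rec -> rec
  | RPrim : rec -> rec -> rec
  | RMu   : rec -> rec.

Inductive eval : rec -> list nat -> nat -> Prop :=
  | ev_zero : forall v, eval RZero v 0
  | ev_succ : forall x v, eval RSucc (x :: v) (S x)
  | ev_proj : forall i v, (i < length v)%nat -> eval (RProj i) v (nth i v 0%nat)
  | ev_comp : forall f gs v ws y,
      evals gs v ws -> eval f ws y -> eval (RComp f gs) v y
  | ev_prim0 : forall f g v y, eval f v y -> eval (RPrim f g) (0%nat :: v) y
  | ev_primS : forall f g n v r y,
      eval (RPrim f g) (n :: v) r -> eval g (n :: r :: v) y ->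
      eval (RPrim f g) (S n :: v) y
  | ev_mu : forall f v y,
      eval f (y :: v) 0%nat ->
      (forall z, (z < y)%nat -> exists k, eval f (z :: v) (S k)) ->
      eval (RMu f) v y
with evals : list rec -> list nat -> list nat -> Prop :=
  | evs_nil : forall v, evals [] v []
  | evs_cons : forall g gs v w ws,
      eval g v w -> evals gs v ws -> evals (g :: gs) v (w :: ws).

Definition computable1 (f : nat -> nat) : Prop :=
  exists c : rec, forall x, eval c [x] (f x).
Definition computable2 (f : nat -> nat -> nat) : Prop :=
  exists c : rec, forall x y, eval c [x; y] (f x y).

(** Bijective coding of finite binary strings by natural numbers. *)
Fixpoint code (s : list bool) : nat :=
  match s with
  | [] => 0%nat
  | b :: s' => (2 * code s' + (if b then 2 else 1))%nat
  end.

Definition computable_seq (X : nat -> bool) : Prop :=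
  computable1 (fun n => if X n then 1%nat else 0%nat).

Definition prefix (X : nat -> bool) (n : nat) : list bool := map X (seq 0 n).

Definition semimeasure (rho : list bool -> R) : Prop :=
  rho [] = 1 /\
  (forall s, 0 <= rho s <= 1) /\
  (forall s, rho s >= rho (s ++ [false]) + rho (s ++ [true])).

(** The s-th approximation to rho(sigma) is the rational
    (P(c,s) - M(c,s)) / (D(c,s)+1), c = code sigma, with P, M, D computable. *)
Definition approx (P M D : nat -> nat -> nat) (s : list bool) (t : nat) : R :=
  (INR (P (code s) t) - INR (M (code s) t)) / INR (S (D (code s) t)).

Definition left_ce (rho : list bool -> R) : Prop :=
  exists P M D : nat -> nat -> nat,
    computable2 P /\ computable2 M /\ computable2 D /\
    forall s, (forall t, approx P M D s t <= approx P M D s (S t)) /\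
              is_lim_seq (approx P M D s) (rho s).

(** [ext_sum rho s k] = sum of rho(tau) over all tau extending s with |tau| = |s|+k. *)
Fixpoint ext_sum (rho : list bool -> R) (s : list bool) (k : nat) : R :=
  match k with
  | O => rho s
  | S k' => ext_sum rho (s ++ [false]) k' + ext_sum rho (s ++ [true]) k'
  end.

Definition rhobar (rho : list bool -> R) (s : list bool) : R :=
  real (Inf_seq (fun k => Finite (ext_sum rho s k))).

Definition atom (rho : list bool -> R) (X : nat -> bool) : Prop :=
  exists l : R, 0 < l /\ is_lim_seq (fun n => rhobar rho (prefix X n)) l.

From Stdlib Require Import Reals List Lia Lra Arith Wf_nat.
From Coquelicot Require Import Coquelicot.
Import ListNotations.

(* If [X] is computable, the point mass at [X] is a computable measure with atom [X].
   Conversely, let [lim rhobar (X|n) = l > 0] and choose [1/b < l].  Every prefix of [X]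
   has [rho]-mass above [1/b], while, since all but [l] of the mass [rhobar (X|n)] stays on
   [X], from some depth [N0] on the extension of [X|N] by the wrong bit has mass below [1/b].
   So beyond [N0] the next bit of [X] is found from [X|N] by waiting for a stage at which the
   approximation to one of the two one-bit extensions exceeds [1/b]: it can only be the
   correct one.  Only the finitely many bits below [N0] are hard-wired. *)

Open Scope nat_scope.

(* Programs are required to ignore surplus arguments, so that arity-[n] facts compose. *)
Definition computes (n : nat) (c : rec) (f : list nat -> nat) : Prop :=
  forall v, n <= length v -> eval c v (f v).

Lemma computes_ext n c f g :
  computes n c f -> (forall v, n <= length v -> f v = g v) -> computes n c g.
Proof. intros Hc E v Hv. rewrite <- E by exact Hv. exact (Hc v Hv). Qed.

Lemma computes_zero n : computes n RZero (fun _ => 0).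
Proof. intros v _. constructor. Qed.

Lemma computes_succ : computes 1 RSucc (fun v => S (nth 0 v 0)).
Proof. intros [|x v] Hv; simpl in *; [lia | constructor]. Qed.

Lemma computes_proj n i : i < n -> computes n (RProj i) (fun v => nth i v 0).
Proof. intros Hi v Hv. constructor. lia. Qed.

Lemma eval_comp1 f g v a y : eval g v a -> eval f [a] y -> eval (RComp f [g]) v y.
Proof. intros Hg Hf. apply ev_comp with [a]; [constructor; [exact Hg | constructor] | exact Hf]. Qed.

Lemma eval_comp2 f g1 g2 v a1 a2 y :
  eval g1 v a1 -> eval g2 v a2 -> eval f [a1; a2] y -> eval (RComp f [g1; g2]) v y.
Proof.
  intros H1 H2 Hf. apply ev_comp with [a1; a2]; [|exact Hf].
  constructor; [exact H1 | constructor; [exact H2 | constructor]].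
Qed.

Lemma computes_comp1 n f F g G :
  computes 1 f F -> computes n g G -> computes n (RComp f [g]) (fun v => F [G v]).
Proof.
  intros HF HG v Hv. apply (eval_comp1 _ _ _ (G v)); [apply HG, Hv | apply HF; simpl; lia].
Qed.

Lemma computes_comp2 n f F g1 G1 g2 G2 :
  computes 2 f F -> computes n g1 G1 -> computes n g2 G2 ->
  computes n (RComp f [g1; g2]) (fun v => F [G1 v; G2 v]).
Proof.
  intros HF H1 H2 v Hv. apply (eval_comp2 _ _ _ _ (G1 v) (G2 v));
    [apply H1, Hv | apply H2, Hv | apply HF; simpl; lia].
Qed.

Fixpoint primrec (F G : list nat -> nat) (m : nat) (w : list nat) : nat :=
  match m with
  | 0 => F w
  | S m' => G (m' :: primrec F G m' w :: w)
  end.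

Lemma computes_prim n f F g G :
  computes n f F -> computes (S (S n)) g G ->
  computes (S n) (RPrim f g) (fun v => primrec F G (nth 0 v 0) (tl v)).
Proof.
  intros HF HG [|x w] Hv; simpl in *; [lia|].
  induction x; simpl.
  - constructor. apply HF. lia.
  - econstructor; [exact IHx | apply HG; simpl; lia].
Qed.

Lemma eval_mu n f F v y :
  computes (S n) f F -> n <= length v -> F (y :: v) = 0 ->
  (forall z, z < y -> F (z :: v) <> 0) -> eval (RMu f) v y.
Proof.
  intros HF Hv Hy Hz. constructor.
  - rewrite <- Hy. apply HF. simpl; lia.
  - intros z Hzy. destruct (F (z :: v)) as [|k] eqn:E; [now destruct (Hz z Hzy)|].
    exists k. rewrite <- E. apply HF. simpl; lia.
Qed.

Lemma eval_mu_root n f F v :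
  computes (S n) f F -> n <= length v -> (exists y, F (y :: v) = 0) ->
  exists y, eval (RMu f) v y /\ F (y :: v) = 0.
Proof.
  intros HF Hv Hex.
  destruct (dec_inh_nat_subset_has_unique_least_element (fun y => F (y :: v) = 0))
    as [y [[Hy Hleast] _]]; [intros; lia | exact Hex |].
  exists y. split; [|exact Hy]. apply (eval_mu n f F); auto.
  intros z Hzy Hz. specialize (Hleast z Hz). lia.
Qed.

Lemma computes_mu n f F m :
  computes (S n) f F ->
  (forall v, n <= length v ->
     F (m v :: v) = 0 /\ forall z, z < m v -> F (z :: v) <> 0) ->
  computes n (RMu f) m.
Proof. intros HF Hm v Hv. destruct (Hm v Hv). apply (eval_mu n f F); auto. Qed.

Fixpoint cconst (k : nat) : rec :=
  match k with 0 => RZero | S k => RComp RSucc [cconst k] end.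

Lemma computes_const n k : computes n (cconst k) (fun _ => k).
Proof.
  induction k; simpl; [apply computes_zero|].
  eapply computes_ext; [apply computes_comp1; [apply computes_succ | apply IHk]|].
  reflexivity.
Qed.

Create HintDb programs.

Ltac program := repeat first
  [ eassumption
  | solve [eauto with programs]
  | apply computes_zero | apply computes_succ | apply computes_const
  | apply computes_proj; simpl; lia
  | apply computes_comp2 | apply computes_comp1 ].

Ltac program_ext := eapply computes_ext; [program|].

Definition cadd := RPrim (RProj 0) (RComp RSucc [RProj 1]).
Lemma computes_add : computes 2 cadd (fun v => nth 0 v 0 + nth 1 v 0).
Proof.
  eapply computes_ext; [apply computes_prim; program|].
  intros [|x w] Hv; simpl in *; [lia|]. induction x; simpl; auto.
Qed.
#[export] Hint Resolve computes_add : programs.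

Definition cmul := RPrim RZero (RComp cadd [RProj 1; RProj 2]).
Lemma computes_mul : computes 2 cmul (fun v => nth 0 v 0 * nth 1 v 0).
Proof.
  eapply computes_ext; [apply computes_prim; program|].
  intros [|x w] Hv; simpl in *; [lia|]. induction x; simpl; lia.
Qed.
#[export] Hint Resolve computes_mul : programs.

Definition cpred := RPrim RZero (RProj 0).
Lemma computes_pred : computes 1 cpred (fun v => pred (nth 0 v 0)).
Proof.
  eapply computes_ext; [apply computes_prim; program|].
  intros [|[|x] w] Hv; simpl in *; lia.
Qed.
#[export] Hint Resolve computes_pred : programs.

(* Primitive recursion runs on the first argument, so [y - x] is computed
   first and then the arguments are swapped. *)
Definition csub := RComp (RPrim (RProj 0) (RComp cpred [RProj 1])) [RProj 1; RProj 0].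
Lemma computes_sub : computes 2 csub (fun v => nth 0 v 0 - nth 1 v 0).
Proof.
  eapply computes_ext; [apply computes_comp2; [apply computes_prim|..]; program|].
  intros [|x [|y w]] Hv; simpl in *; try lia. induction y; simpl; lia.
Qed.
#[export] Hint Resolve computes_sub : programs.

Definition cpow2 := RPrim (cconst 1) (RComp cadd [RProj 1; RProj 1]).
Lemma computes_pow2 : computes 1 cpow2 (fun v => 2 ^ nth 0 v 0).
Proof.
  eapply computes_ext; [apply computes_prim; program|].
  intros [|x w] Hv; simpl in *; [lia|]. induction x; simpl; lia.
Qed.
#[export] Hint Resolve computes_pow2 : programs.

Definition chalf :=
  RMu (RComp csub [RComp RSucc [RProj 1];
                   RComp RSucc [RComp RSucc [RComp cadd [RProj 0; RProj 0]]]]).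
Lemma computes_half : computes 1 chalf (fun v => Nat.div2 (nth 0 v 0)).
Proof.
  eapply computes_mu; [program|].
  intros [|x w] Hv; simpl in *; [lia|].
  pose proof (Nat.div2_odd x) as Hx. destruct (Nat.odd x); simpl in Hx; split; lia.
Qed.
#[export] Hint Resolve computes_half : programs.

Definition csg := RComp csub [cconst 1; RComp csub [cconst 1; RProj 0]].
Lemma computes_sg : computes 1 csg (fun v => Nat.b2n (0 <? nth 0 v 0)).
Proof. program_ext. intros v _. cbn [nth]. destruct (nth 0 v 0); reflexivity. Qed.
#[export] Hint Resolve computes_sg : programs.

Definition ceqb :=
  RComp csub [cconst 1; RComp cadd [csub; RComp csub [RProj 1; RProj 0]]].
Lemma computes_eqb : computes 2 ceqb (fun v => Nat.b2n (nth 0 v 0 =? nth 1 v 0)).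
Proof.
  program_ext. intros v _. cbn [nth].
  destruct (Nat.eqb_spec (nth 0 v 0) (nth 1 v 0)); cbn [Nat.b2n]; lia.
Qed.
#[export] Hint Resolve computes_eqb : programs.

Lemma computes_of_eval2 c (f : nat -> nat -> nat) :
  (forall x y, eval c [x; y] (f x y)) ->
  computes 2 (RComp c [RProj 0; RProj 1]) (fun v => f (nth 0 v 0) (nth 1 v 0)).
Proof.
  intros Hc v Hv. apply (eval_comp2 _ _ _ _ (nth 0 v 0) (nth 1 v 0));
    [constructor; lia | constructor; lia | apply Hc].
Qed.

Lemma code_cons b s : code (b :: s) = S (2 * code s + Nat.b2n b).
Proof. destruct b; simpl; lia. Qed.

Lemma code_snoc s b : code (s ++ [b]) = code s + 2 ^ length s * S (Nat.b2n b).
Proof.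
  induction s as [|c s IH]; simpl app; rewrite !code_cons;
    [destruct b; simpl | rewrite IH; simpl]; lia.
Qed.

Lemma length_le_code s : length s <= code s.
Proof. induction s as [|b s IH]; [simpl|rewrite code_cons; simpl]; lia. Qed.

Lemma code_inj s t : code s = code t -> s = t.
Proof.
  revert t; induction s as [|b s IH]; intros [|c t] E; rewrite ?code_cons in E;
    try (simpl in E; lia); [reflexivity|].
  assert (Hb : Nat.b2n b = Nat.b2n c) by (destruct b, c; simpl in E; lia).
  rewrite (IH t) by lia. destruct b, c; easy.
Qed.

Definition tail_code (c : nat) : nat := Nat.div2 (pred c).
Definition head_code (c : nat) : nat := c - S (2 * tail_code c).
Definition bit_code (m c : nat) : nat := head_code (Nat.iter m tail_code c).

Lemma tail_code_cons b s : tail_code (code (b :: s)) = code s.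
Proof.
  unfold tail_code. rewrite code_cons, Nat.pred_succ.
  destruct b; cbn [Nat.b2n]; rewrite ?Nat.add_0_r, ?Nat.add_1_r;
    [apply Nat.div2_succ_double | apply Nat.div2_double].
Qed.

Lemma head_code_cons b s : head_code (code (b :: s)) = Nat.b2n b.
Proof. unfold head_code. rewrite tail_code_cons, code_cons. lia. Qed.

Lemma iter_tail_code j s : Nat.iter j tail_code (code s) = code (skipn j s).
Proof.
  revert s; induction j as [|j IH]; intros s; [reflexivity|].
  rewrite Nat.iter_succ_r. destruct s as [|b s]; [|rewrite tail_code_cons; apply IH].
  specialize (IH []). rewrite skipn_nil in *. exact IH.
Qed.

Lemma skipn_cons_nth j (s : list bool) :
  j < length s -> skipn j s = nth j s false :: skipn (S j) s.
Proof. revert s; induction j; intros [|b s] H; simpl in *; try lia; auto with arith. Qed.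

Lemma bit_code_nth m s : m < length s -> bit_code m (code s) = Nat.b2n (nth m s false).
Proof.
  intros Hm. unfold bit_code. rewrite iter_tail_code, skipn_cons_nth by exact Hm.
  apply head_code_cons.
Qed.

Definition ctail := RComp chalf [cpred].
Lemma computes_tail : computes 1 ctail (fun v => tail_code (nth 0 v 0)).
Proof. program_ext. reflexivity. Qed.
#[export] Hint Resolve computes_tail : programs.

Definition cbit :=
  RComp (RComp csub [RProj 0; RComp RSucc [RComp cadd [ctail; ctail]]])
        [RPrim (RProj 0) (RComp ctail [RProj 1])].
Lemma computes_bit : computes 2 cbit (fun v => bit_code (nth 0 v 0) (nth 1 v 0)).
Proof.
  eapply computes_ext; [apply computes_comp1; [|apply computes_prim]; program|].
  intros [|m [|c w]] Hv; simpl in Hv; try lia. unfold bit_code, head_code. simpl.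
  replace (primrec _ _ m _) with (Nat.iter m tail_code c); [lia|].
  induction m; simpl; congruence.
Qed.
#[export] Hint Resolve computes_bit : programs.

Lemma length_prefix X n : length (prefix X n) = n.
Proof. unfold prefix. rewrite length_map, length_seq. reflexivity. Qed.

Lemma nth_prefix X n j : j < n -> nth j (prefix X n) false = X j.
Proof.
  intros H. unfold prefix.
  rewrite nth_indep with (d' := X 0) by (rewrite length_map, length_seq; exact H).
  rewrite map_nth, seq_nth; auto.
Qed.

Lemma prefix_S X n : prefix X (S n) = prefix X n ++ [X n].
Proof. unfold prefix. rewrite seq_S, map_app. reflexivity. Qed.

Definition cext (N0 : nat) (cb : rec) : rec :=
  RComp cadd [RProj 1; RComp cmul [RComp cpow2 [RComp cadd [cconst N0; RProj 0]];
                                   RComp RSucc [cb]]].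

Lemma eval_cext N0 cb N g w k :
  eval cb (N :: g :: w) k -> eval (cext N0 cb) (N :: g :: w) (g + 2 ^ (N0 + N) * S k).
Proof.
  intros Hk. assert (Hpow : computes 1 (RComp cpow2 [RComp cadd [cconst N0; RProj 0]])
                              (fun v => 2 ^ (N0 + nth 0 v 0))) by (program_ext; reflexivity).
  apply (eval_comp2 _ _ _ _ g (2 ^ (N0 + N) * S k)).
  - constructor. simpl; lia.
  - apply (eval_comp2 _ _ _ _ (2 ^ (N0 + N)) (S k)).
    + apply Hpow. simpl; lia.
    + apply (eval_comp1 _ _ _ k); [exact Hk | apply computes_succ; simpl; lia].
    + apply computes_mul. simpl; lia.
  - apply computes_add. simpl; lia.
Qed.

Lemma computes_ext_const N0 k :
  computes 2 (cext N0 (cconst k)) (fun v => nth 1 v 0 + 2 ^ (N0 + nth 0 v 0) * S k).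
Proof. program_ext. reflexivity. Qed.
#[export] Hint Resolve computes_ext_const : programs.

Definition cprefix_code (c0 N0 : nat) (cb : rec) : rec := RPrim (cconst c0) (cext N0 cb).

Lemma computes_prefix_code X N0 cb :
  (forall N w, eval cb (N :: code (prefix X (N0 + N)) :: w) (Nat.b2n (X (N0 + N)))) ->
  computes 1 (cprefix_code (code (prefix X N0)) N0 cb)
    (fun v => code (prefix X (N0 + nth 0 v 0))).
Proof.
  intros Hb [|N w] Hv; simpl in Hv; [lia|]. simpl nth.
  induction N as [|N IH].
  - constructor. rewrite Nat.add_0_r. apply (computes_const 0). lia.
  - econstructor; [exact IH|].
    rewrite Nat.add_succ_r, prefix_S, code_snoc, length_prefix.
    apply eval_cext, Hb.
Qed.

Lemma prefix_code_of_computable_seq X :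
  computable_seq X -> exists cG, computes 1 cG (fun v => code (prefix X (nth 0 v 0))).
Proof.
  intros [cX HX]. exists (cprefix_code 0 0 (RComp cX [RProj 0])).
  apply (computes_prefix_code X 0). intros N w.
  apply (eval_comp1 _ _ _ N); [constructor; simpl; lia | apply HX].
Qed.

(* Bit [m] of [X] is read off the code of a prefix of length at least [m + 1]. *)
Lemma computable_seq_of_prefix_code X N0 cG :
  computes 1 cG (fun v => code (prefix X (N0 + nth 0 v 0))) -> computable_seq X.
Proof.
  intros HG.
  set (c := RComp cbit [RProj 0; RComp cG [RComp csub [RComp RSucc [RProj 0]; cconst N0]]]).
  exists c. intros m.
  assert (Hc : computes 1 c
                 (fun v => bit_code (nth 0 v 0) (code (prefix X (N0 + (S (nth 0 v 0) - N0))))))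
    by (unfold c; program_ext; reflexivity).
  specialize (Hc [m] ltac:(simpl; lia)). cbn [nth] in Hc.
  rewrite bit_code_nth, nth_prefix in Hc by (rewrite ?length_prefix; lia). exact Hc.
Qed.

Fixpoint bsum (F : nat -> nat) (k : nat) : nat :=
  match k with 0 => 0 | S k => bsum F k + F k end.

Lemma bsum_pos F k : 0 < bsum F k <-> exists i, i < k /\ 0 < F i.
Proof.
  induction k as [|k IH]; simpl.
  - split; [lia | intros [i [Hi _]]; lia].
  - split.
    + intros H. destruct (Nat.eq_dec (F k) 0) as [E|E].
      * destruct (proj1 IH ltac:(lia)) as [i [Hi Hf]]. exists i. split; [lia | exact Hf].
      * exists k. split; lia.
    + intros [i [Hi Hf]]. destruct (Nat.eq_dec i k) as [->|E]; [lia|].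
      enough (0 < bsum F k) by lia. apply IH. exists i. split; [lia | exact Hf].
Qed.

Definition cbsum (f : rec) : rec := RPrim RZero (RComp cadd [RProj 1; RComp f [RProj 0; RProj 2]]).

Lemma computes_bsum f F :
  computes 2 f F -> computes 2 (cbsum f) (fun v => bsum (fun i => F [i; nth 1 v 0]) (nth 0 v 0)).
Proof.
  intros HF. eapply computes_ext; [apply computes_prim; program|].
  intros [|k [|c w]] Hv; simpl in Hv; try lia. cbn [nth tl].
  induction k as [|k IH]; simpl; congruence.
Qed.

(* Bounded search suffices because [length s <= code s]. *)
Definition is_prefix_code (G : nat -> nat) (c : nat) : nat :=
  Nat.b2n (0 <? bsum (fun n => Nat.b2n (G n =? c)) (S c)).

Lemma is_prefix_code_spec X s :
  is_prefix_code (fun n => code (prefix X n)) (code s) =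
  if list_eq_dec Bool.bool_dec s (prefix X (length s)) then 1 else 0.
Proof.
  unfold is_prefix_code.
  destruct (Nat.ltb_spec 0 (bsum (fun n => Nat.b2n (code (prefix X n) =? code s)) (S (code s))))
    as [H|H];
    destruct list_eq_dec as [E|E]; try reflexivity; exfalso.
  - apply E. apply bsum_pos in H as [n [_ Hn]].
    destruct (Nat.eqb_spec (code (prefix X n)) (code s)) as [Ec|]; [|simpl in Hn; lia].
    apply code_inj in Ec. subst s. rewrite length_prefix. reflexivity.
  - enough (0 < bsum (fun n => Nat.b2n (code (prefix X n) =? code s)) (S (code s))) by lia.
    apply bsum_pos. exists (length s). pose proof (length_le_code s).
    rewrite <- E, Nat.eqb_refl. simpl. lia.
Qed.

Lemma computes_is_prefix_code G cG :
  computes 1 cG (fun v => G (nth 0 v 0)) ->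
  computes 2 (RComp csg [RComp (cbsum (RComp ceqb [RComp cG [RProj 0]; RProj 1]))
                               [RComp RSucc [RProj 0]; RProj 0]])
    (fun v => is_prefix_code G (nth 0 v 0)).
Proof.
  intros HG. eapply computes_ext.
  - apply computes_comp1; [|apply computes_comp2; [apply computes_bsum|..]]; program.
  - reflexivity.
Qed.

Open Scope R_scope.

Definition point_mass (X : nat -> bool) (s : list bool) : R :=
  if list_eq_dec Bool.bool_dec s (prefix X (length s)) then 1 else 0.

Lemma prefix_snoc_inv X s b :
  s ++ [b] = prefix X (length (s ++ [b])) -> s = prefix X (length s) /\ b = X (length s).
Proof.
  rewrite length_app, Nat.add_1_r, prefix_S. intros E. apply app_inj_tail in E. exact E.
Qed.

Lemma point_mass_semimeasure X : semimeasure (point_mass X).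
Proof.
  unfold point_mass. split; [|split].
  - reflexivity.
  - intros s. destruct list_eq_dec; lra.
  - intros s.
    destruct (list_eq_dec Bool.bool_dec (s ++ [false]) _) as [E1|E1];
    destruct (list_eq_dec Bool.bool_dec (s ++ [true]) _) as [E2|E2];
    destruct (list_eq_dec Bool.bool_dec s _) as [E3|E3]; try lra; exfalso;
    try apply prefix_snoc_inv in E1; try apply prefix_snoc_inv in E2; intuition congruence.
Qed.

Lemma ext_sum_point_mass_off X s k :
  s <> prefix X (length s) -> ext_sum (point_mass X) s k = 0.
Proof.
  revert s; induction k as [|k IH]; intros s H; simpl.
  - unfold point_mass. destruct list_eq_dec; tauto || reflexivity.
  - rewrite !IH; [lra | intros E; apply prefix_snoc_inv in E; tauto ..].
Qed.

Lemma ext_sum_point_mass_prefix X n k : ext_sum (point_mass X) (prefix X n) k = 1.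
Proof.
  revert n; induction k as [|k IH]; intros n; simpl.
  - unfold point_mass. rewrite length_prefix. destruct list_eq_dec; tauto || reflexivity.
  - assert (Hoff : ext_sum (point_mass X) (prefix X n ++ [negb (X n)]) k = 0).
    { apply ext_sum_point_mass_off. intros E. apply prefix_snoc_inv in E.
      rewrite length_prefix in E. destruct (X n); simpl in E; intuition congruence. }
    pose proof (IH (S n)) as Hon. rewrite prefix_S in Hon.
    destruct (X n); simpl in Hoff; lra.
Qed.

Lemma point_mass_atom X : atom (point_mass X) X.
Proof.
  exists 1. split; [lra|]. eapply is_lim_seq_ext; [|apply is_lim_seq_const].
  intros n. unfold rhobar. rewrite (is_inf_seq_unique _ (Finite 1)); [reflexivity|].
  intros eps. split.
  - intros k. rewrite ext_sum_point_mass_prefix. simpl. destruct eps; simpl; lra.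
  - exists 0%nat. rewrite ext_sum_point_mass_prefix. simpl. destruct eps; simpl; lra.
Qed.

Lemma point_mass_left_ce X : computable_seq X -> left_ce (point_mass X).
Proof.
  intros HX. destruct (prefix_code_of_computable_seq X HX) as [cG HG].
  pose proof (computes_is_prefix_code (fun n => code (prefix X n)) cG HG) as HP.
  exists (fun c _ => is_prefix_code (fun n => code (prefix X n)) c),
    (fun _ _ => 0%nat), (fun _ _ => 0%nat).
  split; [|split; [|split]].
  - eexists. intros c t. apply (HP [c; t]). simpl; lia.
  - exists RZero. intros; constructor.
  - exists RZero. intros; constructor.
  - intros s. unfold approx. rewrite is_prefix_code_spec.
    split; [intros; lra|]. eapply is_lim_seq_ext; [|apply is_lim_seq_const].
    intros t. unfold point_mass. destruct list_eq_dec; simpl; lra.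
Qed.

Lemma Inf_seq_nonneg_spec (u : nat -> R) : (forall n, 0 <= u n) ->
  (forall n, real (Inf_seq (fun n => Finite (u n))) <= u n) /\
  (forall eps, 0 < eps -> exists n, u n < real (Inf_seq (fun n => Finite (u n))) + eps).
Proof.
  intros Hu. pose proof (Inf_seq_correct (fun n => Finite (u n))) as H.
  destruct (Inf_seq (fun n => Finite (u n))) as [x| |]; simpl in H |- *.
  - split.
    + intros n. destruct (Rle_lt_dec x (u n)) as [h|h]; [exact h|].
      assert (Hp : 0 < x - u n) by lra. destruct (H (mkposreal _ Hp)) as [Hlow _].
      specialize (Hlow n). simpl in Hlow. lra.
    + intros eps Heps. destruct (H (mkposreal _ Heps)) as [_ Hup]. exact Hup.
  - specialize (H (u 0%nat) 0%nat). simpl in H. lra.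
  - destruct (H 0) as [n Hn]. simpl in Hn. specialize (Hu n). lra.
Qed.

Section Semimeasure.

Variable rho : list bool -> R.
Hypothesis Hrho : semimeasure rho.

Lemma ext_sum_nonneg s k : 0 <= ext_sum rho s k.
Proof.
  destruct Hrho as [_ [Hbound _]]. revert s; induction k as [|k IH]; intros s; simpl.
  - apply Hbound.
  - pose proof (IH (s ++ [false])); pose proof (IH (s ++ [true])); lra.
Qed.

Lemma ext_sum_succ_le s k : ext_sum rho s (S k) <= ext_sum rho s k.
Proof.
  destruct Hrho as [_ [_ Hsplit]]. revert s; induction k as [|k IH]; intros s.
  - simpl. specialize (Hsplit s). lra.
  - change (ext_sum rho s (S (S k))) with
      (ext_sum rho (s ++ [false]) (S k) + ext_sum rho (s ++ [true]) (S k)).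
    change (ext_sum rho s (S k)) with
      (ext_sum rho (s ++ [false]) k + ext_sum rho (s ++ [true]) k).
    pose proof (IH (s ++ [false])); pose proof (IH (s ++ [true])); lra.
Qed.

Lemma ext_sum_antitone s k m : (k <= m)%nat -> ext_sum rho s m <= ext_sum rho s k.
Proof.
  induction 1 as [|m _ IH]; [lra|]. pose proof (ext_sum_succ_le s m). lra.
Qed.

Lemma ext_sum_snoc_le s b k : ext_sum rho (s ++ [b]) k <= ext_sum rho s (S k).
Proof.
  simpl. pose proof (ext_sum_nonneg (s ++ [false]) k).
  pose proof (ext_sum_nonneg (s ++ [true]) k). destruct b; lra.
Qed.

Lemma rhobar_le_ext_sum s k : rhobar rho s <= ext_sum rho s k.
Proof. apply (Inf_seq_nonneg_spec (ext_sum rho s)), ext_sum_nonneg. Qed.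

Lemma rhobar_approx s eps : 0 < eps -> exists k, ext_sum rho s k < rhobar rho s + eps.
Proof. apply (Inf_seq_nonneg_spec (ext_sum rho s)), ext_sum_nonneg. Qed.

Lemma rhobar_ge s x : (forall k, x <= ext_sum rho s k) -> x <= rhobar rho s.
Proof.
  intros Hx. destruct (Rle_lt_dec x (rhobar rho s)) as [h|h]; [exact h|].
  destruct (rhobar_approx s (x - rhobar rho s)) as [k Hk]; [lra|].
  specialize (Hx k). lra.
Qed.

Lemma rhobar_le s : rhobar rho s <= rho s.
Proof. exact (rhobar_le_ext_sum s 0). Qed.

Lemma rhobar_snoc_le s b : rhobar rho (s ++ [b]) <= rhobar rho s.
Proof.
  apply rhobar_ge. intros k.
  pose proof (rhobar_le_ext_sum (s ++ [b]) k). pose proof (ext_sum_snoc_le s b k).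
  pose proof (ext_sum_succ_le s k). lra.
Qed.

Lemma ext_sum_prefix_le X n i j :
  ext_sum rho (prefix X (n + i)) j <= ext_sum rho (prefix X n) (i + j).
Proof.
  revert n; induction i as [|i IH]; intros n.
  { rewrite Nat.add_0_r. apply Rle_refl. }
  rewrite <- Nat.add_succ_comm. pose proof (IH (S n)) as H.
  rewrite (prefix_S X n) in H.
  pose proof (ext_sum_snoc_le (prefix X n) (X n) (i + j)). simpl (S i + j)%nat. lra.
Qed.

Lemma ext_sum_prefix_one X N :
  ext_sum rho (prefix X N) 1 = rho (prefix X (S N)) + rho (prefix X N ++ [negb (X N)]).
Proof. rewrite prefix_S. simpl. destruct (X N); simpl; lra. Qed.

Lemma rhobar_prefix_lim_le X (l : R) :
  is_lim_seq (fun n => rhobar rho (prefix X n)) l -> forall n, l <= rhobar rho (prefix X n).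
Proof.
  intros Hl. apply (is_lim_seq_decr_compare _ _ Hl). intros n.
  rewrite prefix_S. apply rhobar_snoc_le.
Qed.

(* All but [l] of the mass above [X|n] eventually lies on [X], so the mass
   leaving [X] at depth [N] tends to [0]. *)
Lemma wrong_extension_vanishes X (l : R) :
  is_lim_seq (fun n => rhobar rho (prefix X n)) l ->
  forall r, 0 < r -> exists N0, forall N, (N0 <= N)%nat ->
    rho (prefix X N ++ [negb (X N)]) < r.
Proof.
  intros Hl r Hr. pose proof (rhobar_prefix_lim_le X l Hl) as Hge.
  apply is_lim_seq_spec in Hl. destruct (Hl (mkposreal r Hr)) as [n0 Hn0].
  specialize (Hn0 n0 (le_n _)). simpl in Hn0. apply Rabs_def2 in Hn0.
  destruct (rhobar_approx (prefix X n0) (l + r - rhobar rho (prefix X n0))) as [k Hk]; [lra|].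
  exists (n0 + k)%nat. intros N HN.
  pose proof (ext_sum_prefix_le X n0 (N - n0) 1) as Halong.
  replace (n0 + (N - n0))%nat with N in Halong by lia.
  pose proof (ext_sum_antitone (prefix X n0) k (N - n0 + 1) ltac:(lia)).
  rewrite ext_sum_prefix_one in Halong.
  pose proof (Hge (S N)). pose proof (rhobar_le (prefix X (S N))). lra.
Qed.

Lemma atom_threshold X : atom rho X ->
  exists N0 b, (0 < b)%nat /\
    (forall N, (N0 <= N)%nat -> rho (prefix X N ++ [negb (X N)]) < / INR b) /\
    (forall N, / INR b < rho (prefix X N)).
Proof.
  intros [l [Hl0 Hl]]. destruct (archimed_cor1 l Hl0) as [b [Hbl Hb]].
  assert (Hr : 0 < / INR b) by (apply Rinv_0_lt_compat, lt_0_INR, Hb).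
  destruct (wrong_extension_vanishes X l Hl _ Hr) as [N0 HN0].
  exists N0, b. split; [exact Hb | split; [exact HN0|]].
  intros N. pose proof (rhobar_prefix_lim_le X l Hl N). pose proof (rhobar_le (prefix X N)). lra.
Qed.

End Semimeasure.

Lemma inv_lt_div_iff (B Q y : R) : 0 < B -> 0 < Q -> / B < y / Q <-> Q < y * B.
Proof.
  intros HB HQ. rewrite <- Rlt_div_r by lra.
  replace (/ B * Q) with (Q / B) by (unfold Rdiv; ring). apply Rlt_div_l. lra.
Qed.

Lemma ltb_0_sub x y : (0 <? x - y)%nat = (y <? x)%nat.
Proof. destruct (Nat.ltb_spec 0 (x - y)), (Nat.ltb_spec y x); lia. Qed.

Section Decoding.

Variables (rho : list bool -> R) (X : nat -> bool) (P M D : nat -> nat -> nat).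
Variables (cP cM cD : rec) (b N0 : nat).
Hypothesis HP : computes 2 cP (fun v => P (nth 0 v 0%nat) (nth 1 v 0%nat)).
Hypothesis HM : computes 2 cM (fun v => M (nth 0 v 0%nat) (nth 1 v 0%nat)).
Hypothesis HD : computes 2 cD (fun v => D (nth 0 v 0%nat) (nth 1 v 0%nat)).
Hypothesis Happrox : forall s,
  (forall t, approx P M D s t <= approx P M D s (S t)) /\ is_lim_seq (approx P M D s) (rho s).
Hypothesis Hb : (0 < b)%nat.
Hypothesis Hwrong : forall N, (N0 <= N)%nat -> rho (prefix X N ++ [negb (X N)]) < / INR b.
Hypothesis Hright : forall N, / INR b < rho (prefix X N).

Definition test (c t : nat) : nat := Nat.b2n (S (D c t) + M c t * b <? P c t * b).

Lemma test_code s t : test (code s) t = 1%nat <-> / INR b < approx P M D s t.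
Proof.
  unfold test, approx. rewrite inv_lt_div_iff by (apply lt_0_INR; lia).
  destruct (Nat.ltb_spec (S (D (code s) t) + M (code s) t * b) (P (code s) t * b)) as [H|H];
    simpl Nat.b2n.
  - apply lt_INR in H. rewrite plus_INR, !mult_INR in H. split; [intros _; lra | reflexivity].
  - apply le_INR in H. rewrite plus_INR, !mult_INR in H. split; [discriminate | lra].
Qed.

Lemma test_le_1 c t : (test c t <= 1)%nat.
Proof. unfold test. destruct (_ <? _); simpl; lia. Qed.

Lemma test_wrong_extension N t :
  test (code (prefix X (N0 + N) ++ [negb (X (N0 + N))])) t = 0%nat.
Proof.
  pose proof (Hwrong (N0 + N) ltac:(lia)) as Hsmall.
  set (s := prefix X (N0 + N) ++ [negb (X (N0 + N))]) in *.
  destruct (Nat.eq_dec (test (code s) t) 0) as [E|E]; [exact E | exfalso].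
  pose proof (test_le_1 (code s) t).
  assert (Hpass : / INR b < approx P M D s t) by (apply test_code; lia).
  destruct (Happrox s) as [Hincr Hlim].
  pose proof (is_lim_seq_incr_compare _ _ Hlim Hincr t). lra.
Qed.

Lemma test_right_extension N : exists t, test (code (prefix X (S N))) t = 1%nat.
Proof.
  destruct (Happrox (prefix X (S N))) as [_ Hlim]. apply is_lim_seq_spec in Hlim.
  assert (Hgap : 0 < rho (prefix X (S N)) - / INR b) by (specialize (Hright (S N)); lra).
  destruct (Hlim (mkposreal _ Hgap)) as [t Ht]. exists t. apply test_code.
  specialize (Ht t (le_n _)). simpl in Ht. apply Rabs_def2 in Ht. lra.
Qed.

Open Scope nat_scope.

#[local] Hint Resolve HP HM HD : programs.

Definition ctest : rec :=
  RComp csg [RComp csub [RComp cmul [cP; cconst b];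
                         RComp cadd [RComp RSucc [cD]; RComp cmul [cM; cconst b]]]].

Lemma computes_test : computes 2 ctest (fun v => test (nth 0 v 0) (nth 1 v 0)).
Proof.
  program_ext. intros v _. cbn [nth]. rewrite ltb_0_sub. reflexivity.
Qed.
#[local] Hint Resolve computes_test : programs.

(* On input [t :: N :: g :: _], [0] iff at stage [t] one of the two one-bit
   extensions of the string coded by [g] passes the test. *)
Definition csearch : rec :=
  RComp csub [cconst 1;
    RComp cadd [RComp ctest [RComp (cext N0 (cconst 0)) [RProj 1; RProj 2]; RProj 0];
                RComp ctest [RComp (cext N0 (cconst 1)) [RProj 1; RProj 2]; RProj 0]]].

Definition cbit_search : rec :=
  RComp ctest [cext N0 (cconst 1); RMu csearch].

Definition ext_code (N g : nat) (bb : bool) : nat := g + 2 ^ (N0 + N) * S (Nat.b2n bb).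

Lemma ext_code_prefix N bb :
  ext_code N (code (prefix X (N0 + N))) bb = code (prefix X (N0 + N) ++ [bb]).
Proof. unfold ext_code. rewrite code_snoc, length_prefix. reflexivity. Qed.

Lemma computes_search :
  computes 3 csearch (fun v => 1 - (test (ext_code (nth 1 v 0) (nth 2 v 0) false) (nth 0 v 0)
                                    + test (ext_code (nth 1 v 0) (nth 2 v 0) true) (nth 0 v 0))).
Proof. program_ext. reflexivity. Qed.

Lemma search_halts N : exists t,
  test (ext_code N (code (prefix X (N0 + N))) false) t
  + test (ext_code N (code (prefix X (N0 + N))) true) t <> 0.
Proof.
  destruct (test_right_extension (N0 + N)) as [t Ht]. exists t.
  rewrite prefix_S in Ht. rewrite !ext_code_prefix.
  destruct (X (N0 + N)); rewrite Ht; lia.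
Qed.

Lemma search_root_bit N t :
  test (ext_code N (code (prefix X (N0 + N))) false) t
  + test (ext_code N (code (prefix X (N0 + N))) true) t <> 0 ->
  test (ext_code N (code (prefix X (N0 + N))) true) t = Nat.b2n (X (N0 + N)).
Proof.
  rewrite !ext_code_prefix. pose proof (test_wrong_extension N t) as Hw.
  pose proof (test_le_1 (code (prefix X (N0 + N) ++ [false])) t).
  pose proof (test_le_1 (code (prefix X (N0 + N) ++ [true])) t).
  destruct (X (N0 + N)); cbn [negb Nat.b2n] in *; lia.
Qed.

Lemma eval_bit_search N w :
  eval cbit_search (N :: code (prefix X (N0 + N)) :: w) (Nat.b2n (X (N0 + N))).
Proof.
  destruct (eval_mu_root 2 _ _ (N :: code (prefix X (N0 + N)) :: w) computes_search)
    as [t [Ht Hroot]]; cbn [nth] in *;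
    [simpl; lia | destruct (search_halts N) as [t Ht]; exists t; lia |].
  apply (eval_comp2 _ _ _ _ (ext_code N (code (prefix X (N0 + N))) true) t); [| exact Ht |].
  - apply (computes_ext_const N0 1 (N :: _ :: w)). simpl; lia.
  - rewrite <- search_root_bit with (t := t) by lia.
    apply (computes_test [_; t]). simpl; lia.
Qed.

Lemma computable_seq_of_threshold : computable_seq X.
Proof.
  apply (computable_seq_of_prefix_code X N0 (cprefix_code (code (prefix X N0)) N0 cbit_search)).
  apply computes_prefix_code, eval_bit_search.
Qed.

End Decoding.

Theorem proposition6p9 (X : nat -> bool) :
  computable_seq X <->
  exists rho : list bool -> R, semimeasure rho /\ left_ce rho /\ atom rho X.
Proof.
  split.
  - intros HX. exists (point_mass X).
    split; [apply point_mass_semimeasure|].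
    split; [apply point_mass_left_ce, HX | apply point_mass_atom].
  - intros [rho [Hs [[P [M [D [[cP HP] [[cM HM] [[cD HD] Happrox]]]]]] Hatom]]].
    destruct (atom_threshold rho Hs X Hatom) as [N0 [b [Hb [Hwrong Hright]]]].
    apply (computable_seq_of_threshold rho X P M D
             (RComp cP [RProj 0; RProj 1]) (RComp cM [RProj 0; RProj 1])
             (RComp cD [RProj 0; RProj 1]) b N0);
      auto using computes_of_eval2.
Qed.
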